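(* Consider a finite game: players $I=\{1,\ldots,n\}$, finite nonempty pure strategy sets $S_i$, $S=\prod_i S_i$, payoffs $g_i\colon S\to\mathbb{R}$, mixed strategy sets $\Sigma_i$ (probability distributions on $S_i$), $\Sigma=\prod_i\Sigma_i\subseteq\mathbb{R}^k$ with the Euclidean distance, and $f_i\colon\Sigma\to\mathbb{R}$ the multilinear extension of $g_i$. Let $r\colon\Sigma\to S$ be a root function. Then for all $\sigma\in\Sigma$ and $i\in I$: (i) $\alpha_{r_i(\sigma)}(\sigma_i)>0$ and $A_i^{r_i(\sigma)}(\sigma)=0$; (ii) for every $s\in S_i$, if $s\notin\operatorname{supp}(\sigma_i)$ then $s\notin\operatorname{supp}(r_i(\sigma))$; (iii) if $(\sigma^k)_{k\in\mathbb{N}}$ is a sequence in $\Sigma$ with $\sigma^k\to\sigma$, $i\Uparrow\sigma^k$ for all $k$, and $A_i(\sigma)=0$, then $T(\sigma)=0$.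
   Context: Pure strategies $s\in S_i$ are identified with degenerate distributions in $\Sigma_i$. For $\sigma_i\in\Sigma_i$ and $s\in S_i$, $\alpha_s(\sigma_i)$ is the probability $\sigma_i$ assigns to $s$, and $\operatorname{supp}(\sigma_i)=\{s:\alpha_s(\sigma_i)>0\}$. For $\sigma\in\Sigma$, $\sigma(i,s)$ is the profile obtained by replacing $\sigma_i$ by $s$. Define $A_i^s(\sigma)=\max\{f_i(\sigma(i,s))-f_i(\sigma),0\}$, $A_i(\sigma)=\max_{s\in S_i}A_i^s(\sigma)$, $T(\sigma)=\sum_{i\in I}A_i(\sigma)$, and write $i\Uparrow\sigma$ if $A_i(\sigma)>\frac{T(\sigma)}{n+1}$. A root function is a map $r\colon\Sigma\to S$ such that for all $\sigma\in\Sigma$ and $i\in I$, $r_i(\sigma)\in\operatorname{supp}(\sigma_i)$ and $A_i^{r_i(\sigma)}(\sigma)=0$. *)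

From HB Require Import structures.
From mathcomp Require Import all_boot all_order all_algebra.
From mathcomp Require Import all_classical all_reals all_analysis.
Set Implicit Arguments. Unset Strict Implicit. Unset Printing Implicit Defensive.
Import Order.TTheory GRing.Theory Num.Theory.
Local Open Scope ring_scope.
Local Open Scope classical_set_scope.

Section FiniteGame.
Variables (R : realType) (n : nat) (S : 'I_n -> finType).

(* A (possibly mixed) profile: for each player i, a real-valued function on S_i.
   Sigma is the subset of those that are probability distributions. *)
Definition Prof := forall i : 'I_n, {ffun S i -> R}.

Definition PureProf := {dffun forall i : 'I_n, S i}.

Definition is_distr (i : 'I_n) (t : {ffun S i -> R}) : Prop :=
  (forall s, 0 <= t s) /\ \sum_(s : S i) t s = 1.

Definition mixed (sigma : Prof) : Prop := forall i, is_distr (sigma i).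

(* pure strategy s identified with the degenerate distribution at s *)
Definition delta (i : 'I_n) (s : S i) : {ffun S i -> R} :=
  [ffun t => (t == s)%:R].

(* alpha_s(sigma_i) is just sigma i s; support *)
Definition supp (i : 'I_n) (t : {ffun S i -> R}) : {set S i} :=
  [set s | 0 < t s].

Definition upd (sigma : Prof) (i : 'I_n) (t : {ffun S i -> R}) : Prof :=
  fun j => match i =P j with
           | ReflectT e => eq_rect i (fun k => {ffun S k -> R}) t j e
           | ReflectF _ => sigma j
           end.

Variable g : 'I_n -> PureProf -> R.

Definition f (i : 'I_n) (sigma : Prof) : R :=
  \sum_(s : PureProf) (\prod_(j < n) sigma j (s j)) * g i s.

Definition Again (i : 'I_n) (s : S i) (sigma : Prof) : R :=
  Num.max (f i (upd sigma (delta s)) - f i sigma) 0.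

(* max over s in S_i of Again (all values are >= 0, so 0 as neutral is harmless) *)
Definition Amax (i : 'I_n) (sigma : Prof) : R :=
  \big[Num.max/0]_(s : S i) Again s sigma.

Definition Ttot (sigma : Prof) : R := \sum_(i < n) Amax i sigma.

Definition up (i : 'I_n) (sigma : Prof) : Prop :=
  Amax i sigma > Ttot sigma / (n.+1)%:R.

Definition is_root (r : Prof -> forall i : 'I_n, S i) : Prop :=
  forall sigma, mixed sigma -> forall i,
    r sigma i \in supp (sigma i) /\ Again (r sigma i) sigma = 0.

Definition edist (sigma tau : Prof) : R :=
  Num.sqrt (\sum_(i < n) \sum_(s : S i) (sigma i s - tau i s) ^+ 2).

Definition prof_cvg (sk : nat -> Prof) (sigma : Prof) : Prop :=
  edist (sk k) sigma @[k --> \oo] --> 0%R.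

End FiniteGame.

(* For (iii), the
   multilinear payoffs are polynomials in the coordinates of the profile, so
   A_i and T are continuous on Sigma. The strict inequalities
   A_i(sigma^k) > T(sigma^k)/(n+1) thus pass to the weak inequality
   T(sigma)/(n+1) <= A_i(sigma) = 0 in the limit, and T >= 0 forces T(sigma) = 0. *)
From Pilot Require Import Defs.
From HB Require Import structures.
From mathcomp Require Import all_boot all_order all_algebra.
From mathcomp Require Import all_classical all_reals all_analysis.
Import Order.TTheory GRing.Theory Num.Theory.
Local Open Scope ring_scope.
Local Open Scope classical_set_scope.
Import numFieldNormedType.Exports.

Lemma maxr_continuous (K : realFieldType) :
  continuous (fun z : K * K => Num.max z.1 z.2).
Proof.
have -> : (fun z : K * K => Num.max z.1 z.2) =
          (fun z => (z.1 + z.2 + `|z.1 - z.2|) / 2).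
  by apply/funext => z; rewrite maxr_absE.
move=> z; apply: cvgM; last exact: cvg_cst.
apply: cvgD; first exact: cvgD cvg_fst cvg_snd.
by apply: cvg_norm; apply: cvgB; [exact: cvg_fst | exact: cvg_snd].
Qed.

Section FiniteGame.
Variables (R : realType) (n : nat) (S : 'I_n -> finType).

Lemma supp_delta i (s : S i) : supp (delta R s) = [set s]%SET.
Proof.
by apply/setP => t; rewrite !inE ffunE; case: (t == s); rewrite ?ltr01 ?ltxx.
Qed.

Definition coord_cvg (sk : nat -> Prof R S) (sigma : Prof R S) : Prop :=
  forall i s, sk k i s @[k --> \oo] --> sigma i s.

(* Qualified: a bare [edist] is MathComp-Analysis' extended distance. *)
Lemma coord_dist_le_edist (sigma tau : Prof R S) i s :
  `|sigma i s - tau i s| <= Defs.edist sigma tau.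
Proof.
rewrite -sqrtr_sqr; apply: ler_wsqrtr.
have sqr_sum_ge0 j (P : pred (S j)) :
    0 <= \sum_(t | P t) (sigma j t - tau j t) ^+ 2.
  by apply: sumr_ge0 => t _; exact: sqr_ge0.
rewrite (bigD1 i) //= (bigD1 s) //= -addrA lerDl.
by apply: addr_ge0; [exact: sqr_sum_ge0 | apply: sumr_ge0 => j _; exact: sqr_sum_ge0].
Qed.

Lemma prof_cvg_coord sk sigma : prof_cvg sk sigma -> coord_cvg sk sigma.
Proof.
move=> sk_cvg i s; apply/subr_cvg0; apply: norm_cvg0.
apply: (squeeze_cvgr _ (cvg_cst 0) sk_cvg).
by near=> k; rewrite normr_ge0 coord_dist_le_edist.
Unshelve. all: by end_near.
Qed.

Lemma coord_cvg_upd sk sigma i (t : {ffun S i -> R}) :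
  coord_cvg sk sigma -> coord_cvg (fun k => upd (sk k) t) (upd sigma t).
Proof.
move=> sk_cvg j u; rewrite /upd.
by case: (i =P j) => [e|_]; [exact: cvg_cst | exact: sk_cvg].
Qed.

Variable g : 'I_n -> PureProf S -> R.

Lemma Amax_ge0 i sigma : 0 <= Amax g i sigma.
Proof.
apply: (big_ind (fun x => 0 <= x)) => // [x y x_ge0 _ | s _].
  by rewrite le_max x_ge0.
by rewrite /Again le_max lexx orbT.
Qed.

Lemma Ttot_ge0 sigma : 0 <= Ttot g sigma.
Proof. by apply: sumr_ge0 => i _; exact: Amax_ge0. Qed.

Lemma cvg_f sk sigma i : coord_cvg sk sigma ->
  f g i (sk k) @[k --> \oo] --> f g i sigma.
Proof.
move=> sk_cvg; apply: cvg_big => [|s _]; first exact: add_continuous.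
apply: cvgM; last exact: cvg_cst.
by apply: cvg_big => [|j _]; [exact: mul_continuous | exact: sk_cvg].
Qed.

Section Continuity.
Variables (sk : nat -> Prof R S) (sigma : Prof R S).
Hypothesis sk_cvg : coord_cvg sk sigma.

Lemma cvg_Again i (s : S i) : Again g s (sk k) @[k --> \oo] --> Again g s sigma.
Proof.
apply: continuous2_cvg; first exact: (@maxr_continuous R (_, _)).
  by apply: cvgB; apply: cvg_f => //; exact: coord_cvg_upd.
exact: cvg_cst.
Qed.

Lemma cvg_Amax i : Amax g i (sk k) @[k --> \oo] --> Amax g i sigma.
Proof.
apply: cvg_big => [|s _]; [exact: maxr_continuous | exact: cvg_Again].
Qed.

Lemma cvg_Ttot : Ttot g (sk k) @[k --> \oo] --> Ttot g sigma.
Proof. by apply: cvg_big => [|i _]; [exact: add_continuous | exact: cvg_Amax]. Qed.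

Lemma up_limit_le i : (forall k, up g i (sk k)) ->
  Ttot g sigma / n.+1%:R <= Amax g i sigma.
Proof.
move=> sk_up; rewrite -subr_ge0.
have gap_cvg : (Amax g i (sk k) - Ttot g (sk k) / n.+1%:R) @[k --> \oo] -->
               Amax g i sigma - Ttot g sigma / n.+1%:R.
  by apply: cvgB; [exact: cvg_Amax | apply: cvgM; [exact: cvg_Ttot | exact: cvg_cst]].
apply: (cvgr_to_ge gap_cvg); near=> k.
by rewrite subr_ge0 ltW //; exact: sk_up.
Unshelve. all: by end_near.
Qed.

Lemma up_limit_Ttot_eq0 i : (forall k, up g i (sk k)) -> Amax g i sigma = 0 ->
  Ttot g sigma = 0.
Proof.
move=> /up_limit_le + Amax0; rewrite Amax0 pmulr_lle0 ?invr_gt0 ?ltr0n // => Ttot_le0.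
by apply/eqP; rewrite eq_le Ttot_le0 Ttot_ge0.
Qed.

End Continuity.

End FiniteGame.

Theorem mainTheorem3 (R : realType) (n : nat) (S : 'I_n -> finType)
  (HS : forall i, (0 < #|S i|)%N)
  (g : 'I_n -> PureProf S -> R)
  (r : Prof R S -> forall i : 'I_n, S i)
  (Hr : is_root g r) :
  forall sigma : Prof R S, mixed sigma -> forall i : 'I_n,
    [/\ 0 < sigma i (r sigma i) /\ Again g (r sigma i) sigma = 0,
        (forall s : S i, s \notin supp (sigma i) ->
                         s \notin supp (delta R (r sigma i)))
      & (forall sk : nat -> Prof R S,
           (forall k, mixed (sk k)) ->
           prof_cvg sk sigma ->
           (forall k, up g i (sk k)) ->
           Amax g i sigma = 0 ->
           Ttot g sigma = 0)].
Proof.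
move=> sigma sigma_mixed i.
have [r_supp r_Again0] := Hr sigma sigma_mixed i.
split.
- by split => //; rewrite inE in r_supp.
- move=> s s_notin; rewrite supp_delta inE.
  by apply: contraNneq s_notin => ->.
- by move=> sk _ /prof_cvg_coord sk_cvg; exact: up_limit_Ttot_eq0 sk_cvg i.
Qed.
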